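(* Let $k\ge2$ and suppose the initial candidate distribution $F_0$ on $[0,1]$ places probability mass $p$ at the point $1/2$. Then there is some $p^*_k<1$ such that if $p>p^*_k$, the candidate distribution converges under the replicator dynamics with left–right tie-breaking to a point mass at $1/2$ (i.e., the mass placed at $1/2$ by $F_{k,t}$ tends to $1$ as $t\to\infty$). Moreover, one of the fixed points of the map $p\mapsto p^k+kp^{k-1}(1-p)$ is such a $p^*_k$.
   Context: Voters form a continuum uniformly distributed on $[0,1]$, each voting for the nearest occupied point. The vote share allocated to an occupied point is the measure of voters whose nearest occupied point it is; it splits into a left part (voters to its left) and a right part (voters to its right). Left–right tie-breaking: if several candidates occupy the same point, one of them chosen uniformly at random receives the entire left part of that point's vote share and a different one chosen uniformly at random receives the entire right part; the others receive nothing. (A single candidate at a point receives both parts.) The plurality winner is the candidate with the largest vote share, ties broken uniformly at random. Replicator dynamics: given a probability distribution $F_0$ on $[0,1]$ and integer $k\ge2$, set $F_{k,0}=F_0$ and for $t\ge1$ let $F_{k,t}$ be the distribution of the position of the plurality winner among $k$ candidates whose positions are i.i.d. with distribution $F_{k,t-1}$. *)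

From HB Require Import structures.
From mathcomp Require Import all_boot all_order all_algebra.
From mathcomp Require Import all_classical all_reals all_analysis.
Set Implicit Arguments. Unset Strict Implicit. Unset Printing Implicit Defensive.
Import Order.TTheory GRing.Theory Num.Theory.
Import numFieldNormedType.Exports.
Local Open Scope classical_set_scope.
Local Open Scope ring_scope.

Section Voting.
Variables (R : realType) (k : nat).

Implicit Types (x : 'I_k -> R).

(* Left part of the vote share of the occupied point x i:
   voters in [0, x i] if no occupied point lies to its left,
   otherwise half the gap to the nearest occupied point on the left. *)
Definition left_part x (i : 'I_k) : R :=
  match [pick j | x j < x i] with
  | Some j0 => (x i - \big[Num.max/x j0]_(j | x j < x i) x j) / 2
  | None => x i
  end.

(* Right part: voters in [x i, 1] if no occupied point lies to its right,
   otherwise half the gap to the nearest occupied point on the right. *)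
Definition right_part x (i : 'I_k) : R :=
  match [pick j | x i < x j] with
  | Some j0 => (\big[Num.min/x j0]_(j | x i < x j) x j - x i) / 2
  | None => 1 - x i
  end.

Definition mult x (i : 'I_k) : nat := #|[set j | x j == x i]|.

(* A tie-breaking outcome (sg, tu): sg i (resp. tu i) is the candidate that
   receives the left (resp. right) part of the point x i.  The uniform
   distribution on valid outcomes is the product over occupied points of
   the uniform distribution on ordered pairs of distinct candidates there. *)
Definition valid_tb x (st : {ffun 'I_k -> 'I_k} * {ffun 'I_k -> 'I_k}) : bool :=
  [forall i, [&& x (st.1 i) == x i, x (st.2 i) == x i &
                 (1 < mult x i)%N ==> (st.1 i != st.2 i)]] &&
  [forall i, forall j, (x i == x j) ==> (st.1 i == st.1 j) && (st.2 i == st.2 j)].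

Definition valid_set x := [set st | valid_tb x st].

Definition share x (st : {ffun 'I_k -> 'I_k} * {ffun 'I_k -> 'I_k}) (j : 'I_k) : R :=
  (if st.1 j == j then left_part x j else 0) +
  (if st.2 j == j then right_part x j else 0).

Definition plur_win (v : 'I_k -> R) (i : 'I_k) : R :=
  if [forall j, v j <= v i] then (#|[set j | v j == v i]|%:R)^-1 else 0.

Definition win_prob x (i : 'I_k) : R :=
  (#|valid_set x|%:R)^-1 * \sum_(st in valid_set x) plur_win (share x st) i.

End Voting.

Fixpoint iint {R : realType} (P : probability R R) (n : nat)
  (g : seq R -> \bar R) : \bar R :=
  match n with
  | 0 => g [::]
  | n'.+1 => (\int[P]_y iint P n' (fun s => g (y :: s)))%E
  end.

Definition winner_law {R : realType} (k : nat) (P : probability R R)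
  (A : set R) : \bar R :=
  iint P k (fun s => (\sum_(i < k)
       win_prob (fun j : 'I_k => nth 0 s j) i * \1_A (nth 0 s i))%:E).

Definition phi {R : realType} (k : nat) (p : R) : R :=
  p ^+ k + k%:R * p ^+ k.-1 * (1 - p).

From HB Require Import structures.
From mathcomp Require Import all_boot all_order all_algebra.
From mathcomp Require Import all_classical all_reals all_analysis.
From mathcomp Require Import lra ring measurable_realfun.
Import Order.TTheory GRing.Theory Num.Theory.
Import numFieldNormedType.Exports.
Local Open Scope classical_set_scope.
Local Open Scope ring_scope.

(* If at most one of the k candidates stands off the centre 1/2, a centre
   candidate wins: the lone outsider collects less than half of the voters,
   while the centre candidate taking the side facing away from it collects
   half.  So, with q_t the mass of F_{k,t} at 1/2, q_{t+1} >= phi k q_t, where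
   phi k q is the probability that at most one of k draws misses the centre.
   Write phi (n+2) p - p = p (1 - p) drift p.  For n > 0 the polynomial drift
   goes from -1 at 0 to 1 at 1 and drift p / p^n increases, so its root c is a
   fixed point of phi in (0, 1) above which 1 - phi p <= r (1 - p) for some
   r < 1 (for n = 0, drift = 1 and c = 0).  Hence 1 - q_t decays
   geometrically. *)

Section Plurality.
Variables (R : realType) (k : nat).
Implicit Types (x v : 'I_k -> R) (st : {ffun 'I_k -> 'I_k} * {ffun 'I_k -> 'I_k}).

Lemma plur_win_ge0 v i : 0 <= plur_win v i.
Proof. by rewrite /plur_win; case: ifP => // _; rewrite invr_ge0 ler0n. Qed.

Lemma plur_win_eq0 v i j : v i < v j -> plur_win v i = 0.
Proof.
move=> vij; rewrite /plur_win; case: ifP => // /forallP/(_ j).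
by rewrite leNgt vij.
Qed.

Lemma sum_plur_win v (i0 : 'I_k) : \sum_i plur_win v i = 1.
Proof.
have [M _ vM] := @arg_maxP _ R _ i0 xpredT v isT.
pose A := [set j | v j == v M].
have inA i : (i \in A) = (v i == v M) by apply/idP/idP => [/set_mem|/mem_set].
have plurE i : plur_win v i = if i \in A then #|A|%:R^-1 else 0.
  rewrite /plur_win inA; case: ifP => [/forallP vi | /negbT vi].
    have -> : v i = v M by apply/eqP; rewrite eq_le vi andbT; apply: vM.
    by rewrite eqxx.
  case: eqP => // viM; case/negP: vi; apply/forallP => j.
  by rewrite viM; apply: vM.
rewrite (eq_bigr _ (fun i _ => plurE i)) -big_mkcond /= sumr_const.
rewrite (@eq_card _ _ (mem A)) // -[LHS]mulr_natr mulVf // pnatr_eq0 -lt0n.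
by apply/card_gt0P; exists M; rewrite inA.
Qed.

Lemma win_prob_ge0 x i : 0 <= win_prob x i.
Proof.
rewrite /win_prob mulr_ge0 ?invr_ge0 ?ler0n //.
by apply: sumr_ge0 => st _; apply: plur_win_ge0.
Qed.

Definition first_at x := [ffun i => odflt i [pick j | x j == x i]].
Definition second_at x :=
  [ffun i => odflt (first_at x i) [pick j | (x j == x i) && (j != first_at x i)]].

Lemma first_second_valid x : (first_at x, second_at x) \in valid_set x.
Proof.
apply: mem_set; apply/andP; split; apply/forallP => i /=.
  have x1 : x (first_at x i) == x i by rewrite ffunE; case: pickP.
  have x2 : x (second_at x i) == x i by rewrite ffunE; case: pickP => [j /andP[]|].
  rewrite x1 x2 /=; apply/implyP => /card_gt1P[y [z [/set_mem/eqP xy /set_mem/eqP xz yz]]].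
  rewrite [second_at x i]ffunE; case: pickP => [j /andP[_]|none]; first by rewrite eq_sym.
  have [ey|ny] := eqVneq y (first_at x i).
    by move: (none z); rewrite xz eqxx -ey eq_sym yz.
  by move: (none y); rewrite xy eqxx ny.
apply/forallP => j; apply/implyP => /eqP xij.
have e1 : first_at x i = first_at x j.
  by rewrite !ffunE xij; case: pickP => // /(_ j); rewrite eqxx.
by rewrite e1 eqxx /= [second_at _ i]ffunE [second_at _ j]ffunE e1 xij.
Qed.

Lemma sum_win_prob x (i0 : 'I_k) : \sum_i win_prob x i = 1.
Proof.
rewrite /win_prob -mulr_sumr exchange_big /=.
rewrite (eq_bigr _ (fun st _ => sum_plur_win (share x st) i0)) sumr_const.
rewrite mulVf // pnatr_eq0 -lt0n.
by apply/card_gt0P; exists (first_at x, second_at x); apply: first_second_valid.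
Qed.

Lemma win_prob_eq0 x i :
  (forall st, st \in valid_set x -> exists j, share x st i < share x st j) ->
  win_prob x i = 0.
Proof.
move=> beaten; rewrite /win_prob big1 ?mulr0 // => st /beaten[j].
exact: plur_win_eq0.
Qed.

Lemma left_part_ge0 x i : 0 <= x i -> 0 <= left_part x i.
Proof.
move=> xi0; rewrite /left_part; case: pickP => // j0 /ltW j0i.
rewrite divr_ge0 // subr_ge0.
by apply: (big_ind (fun y => y <= x i)) => // [a b|j /ltW //]; rewrite ge_max => -> ->.
Qed.

Lemma right_part_ge0 x i : x i <= 1 -> 0 <= right_part x i.
Proof.
move=> xi1; rewrite /right_part; case: pickP => [j0 /ltW ij0|_]; last by rewrite subr_ge0.
rewrite divr_ge0 // subr_ge0.
by apply: (big_ind (fun y => x i <= y)) => // [a b|j /ltW //]; rewrite le_min => -> ->.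
Qed.

Lemma left_part_lowest x i : (forall j, x i <= x j) -> left_part x i = x i.
Proof.
move=> low; rewrite /left_part; case: pickP => // j.
by rewrite ltNge low.
Qed.

Lemma right_part_highest x i : (forall j, x j <= x i) -> right_part x i = 1 - x i.
Proof.
move=> high; rewrite /right_part; case: pickP => // j.
by rewrite ltNge high.
Qed.

Lemma left_part_gap x i j0 b : x j0 < x i ->
  (forall j, x j < x i -> x j = b) -> left_part x i = (x i - b) / 2.
Proof.
move=> j0i below; rewrite /left_part; case: pickP => [j1 j1i|/(_ j0)]; last by rewrite j0i.
congr ((_ - _) / 2).
apply: (big_ind (fun y => y = b)) => [|_ _ -> ->|j]; [exact: below j1i | exact: maxxx | exact: below].
Qed.

Lemma right_part_gap x i j0 b : x i < x j0 ->
  (forall j, x i < x j -> x j = b) -> right_part x i = (b - x i) / 2.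
Proof.
move=> ij0 above; rewrite /right_part; case: pickP => [j1 j1i|/(_ j0)]; last by rewrite ij0.
congr ((_ - _) / 2).
apply: (big_ind (fun y => y = b)) => [|_ _ -> ->|j]; [exact: above j1i | exact: minxx | exact: above].
Qed.

Lemma valid_receivers {x st} i : st \in valid_set x ->
  [/\ x (st.1 i) = x i, x (st.2 i) = x i,
      st.1 (st.1 i) = st.1 i & st.2 (st.2 i) = st.2 i].
Proof.
move=> /set_mem/andP[/forallP at_point /forallP constant].
have /and3P[/eqP x1 /eqP x2 _] := at_point i.
have /andP[/eqP s1 _] := implyP (forallP (constant (st.1 i)) i) (introT eqP x1).
have /andP[_ /eqP s2] := implyP (forallP (constant (st.2 i)) i) (introT eqP x2).
by split.
Qed.

Lemma valid_alone {x st i} : st \in valid_set x ->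
  (forall j, x j = x i -> j = i) -> st.1 i = i /\ st.2 i = i.
Proof. by move=> /(valid_receivers i)[x1 x2 _ _] alone; split; apply: alone. Qed.

Lemma share_ge_left {x st j} : st.1 j = j -> x j <= 1 -> left_part x j <= share x st j.
Proof.
move=> s1 xj1; rewrite /share s1 eqxx lerDl.
by case: ifP => // _; apply: right_part_ge0.
Qed.

Lemma share_ge_right {x st j} : st.2 j = j -> 0 <= x j -> right_part x j <= share x st j.
Proof.
move=> s2 xj0; rewrite /share s2 eqxx lerDr.
by case: ifP => // _; apply: left_part_ge0.
Qed.

Lemma win_prob_lone_off {x i0 j1} : j1 != i0 -> x i0 != 2^-1 ->
  (forall j, j != i0 -> x j = 2^-1) -> win_prob x i0 = 0.
Proof.
move=> j1i0 xi0 center; set c : R := 2^-1 in xi0 center.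
have alone j : x j = x i0 -> j = i0.
  by have [//|/center -> ci0] := eqVneq j i0; rewrite -ci0 eqxx in xi0.
have xj1 := center _ j1i0.
apply: win_prob_eq0 => st vst.
have [s1 s2] := valid_alone vst alone.
have [xl xr sl sr] := valid_receivers j1 vst.
have shareE : share x st i0 = left_part x i0 + right_part x i0.
  by rewrite /share s1 s2 eqxx.
have [lt|gt|eq] := ltgtP (x i0) c; last by rewrite eq eqxx in xi0.
- exists (st.2 j1).
  have low j : x i0 <= x j.
    by have [->|/center ->] := eqVneq j i0; [exact: lexx | exact: ltW].
  have high j : x j <= x (st.2 j1).
    by rewrite xr xj1; have [->|/center ->] := eqVneq j i0; [exact: ltW | exact: lexx].
  have above j : x i0 < x j -> x j = c.
    by have [->|/center //] := eqVneq j i0; rewrite ltxx.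
  have hr : right_part x (st.2 j1) <= share x st (st.2 j1).
    by apply: share_ge_right; rewrite // xr xj1 /c.
  rewrite right_part_highest // xr xj1 in hr; apply: lt_le_trans hr.
  rewrite shareE left_part_lowest // (@right_part_gap x i0 j1 c) ?xj1 //.
  by move: lt; rewrite /c; lra.
- exists (st.1 j1).
  have high j : x j <= x i0.
    by have [->|/center ->] := eqVneq j i0; [exact: lexx | exact: ltW].
  have low j : x (st.1 j1) <= x j.
    by rewrite xl xj1; have [->|/center ->] := eqVneq j i0; [exact: ltW | exact: lexx].
  have below j : x j < x i0 -> x j = c.
    by have [->|/center //] := eqVneq j i0; rewrite ltxx.
  have hl : left_part x (st.1 j1) <= share x st (st.1 j1).
    by apply: share_ge_left; rewrite // xl xj1 /c invf_le1 ?ler1n.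
  rewrite left_part_lowest // xl xj1 in hl; apply: lt_le_trans hl.
  rewrite shareE right_part_highest // (@left_part_gap x i0 j1 c) ?xj1 //.
  by move: gt; rewrite /c; lra.
Qed.

Lemma sum_win_prob_center x : (1 < k)%N ->
  (forall i j, x i != 2^-1 -> x j != 2^-1 -> i = j) ->
  \sum_i win_prob x i * \1_[set 2^-1] (x i) = 1.
Proof.
move=> k_gt1 one_off; have k_gt0 := ltnW k_gt1.
rewrite -[RHS](sum_win_prob x (Ordinal k_gt0)); apply: eq_bigr => i _.
have [xi|xi] := eqVneq (x i) 2^-1; first by rewrite xi indicE mem_set ?mulr1.
pose j1 : 'I_k := if val i == 0%N then Ordinal k_gt1 else Ordinal k_gt0.
have j1i : j1 != i by apply/eqP => /(congr1 val); rewrite /j1; case: eqP => [->|ni] //= /esym.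
rewrite (win_prob_lone_off j1i xi) ?mul0r // => j.
by apply: contraNeq => /one_off/(_ xi) ->.
Qed.

End Plurality.

Lemma count_le1_nth_inj {T : Type} {x0 : T} {a : pred T} {s : seq T} {i j} :
  (count a s <= 1)%N -> (i < size s)%N -> (j < size s)%N ->
  a (nth x0 s i) -> a (nth x0 s j) -> i = j.
Proof.
have lone y t l : (a y + count a t <= 1)%N -> a y -> (l < size t)%N -> ~~ a (nth x0 t l).
  move=> cnt ay lt; apply: contraTN cnt => al; rewrite ay -ltnNge ltnS -has_count.
  by apply/(has_nthP x0); exists l.
elim: s i j => // y s IHs [|i] [|j] //= cnt; rewrite ?ltnS.
- by move=> _ js ay aj; case/negP: (lone _ _ _ cnt ay js).
- by move=> il _ ai ay; case/negP: (lone _ _ _ cnt ay il).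
- move=> il jl ai aj; congr _.+1; apply: IHs il jl ai aj => //.
  exact: leq_trans (leq_addl _ _) cnt.
Qed.

Definition few_off {R : realType} (c : R) (m : nat) (s : seq R) : \bar R :=
  ((if (count (predC1 c) s <= m)%N then 1 else 0 : R))%:E.

Lemma phiS (R : realType) n (p : R) : phi n.+1 p = phi n p * p + p ^+ n * (1 - p).
Proof. by case: n => [|n]; rewrite /phi /= ?expr0 -?natr1 ?exprS; ring. Qed.

Section IteratedIntegral.
Variables (R : realType) (P : probability R R).
Local Open Scope ereal_scope.

Lemma iint_ge0 n (g : seq R -> \bar R) : (forall s, 0 <= g s) -> 0 <= iint P n g.
Proof.
elim: n g => [|n IHn] g g0 /=; first exact: g0.
by apply: integral_ge0 => y _; apply: IHn.
Qed.

(* Monotonicity without measurability: compare the suprema of simple functions. *)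
Lemma le_iint n (g h : seq R -> \bar R) : (forall s, 0 <= g s) ->
  (forall s, 0 <= h s) -> (forall s, size s = n -> g s <= h s) ->
  iint P n g <= iint P n h.
Proof.
elim: n g h => [|n IHn] g h g0 h0 gh /=; first exact: gh.
rewrite !ge0_integralTE => [|y|y]; try by apply: iint_ge0.
apply: ereal_sup_le => _ [f fg <-]; exists f => //= y.
apply: le_trans (fg y) _; apply: IHn => // s sn.
by apply: gh; rewrite /= sn.
Qed.

Lemma iint_cst n (r : R) : iint P n (fun=> r%:E) = r%:E.
Proof.
elim: n => //= n ->.
by rewrite integral_cst // -[RHS]mule1; congr (_ * _); exact: probability_setT.
Qed.

Variable c : R.

Lemma probability_set1E : P [set c] = (fine (P [set c]))%:E.
Proof. by rewrite fineK // fin_num_measure. Qed.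

Lemma integral_if_eq (A B : R) : (0 <= A)%R -> (0 <= B)%R ->
  \int[P]_y (if y == c then A else B)%:E =
  (A * fine (P [set c]) + B * (1 - fine (P [set c])))%:E.
Proof.
move=> A0 B0; set f := fun y => _.
have mf : measurable_fun setT f.
  apply/measurable_EFinP/measurable_fun_ifT => //.
  exact: measurable_fun_eqr.
rewrite -(setUv [set c]) ge0_integral_setU //; first last.
- by apply/disj_setPCl.
- by move=> y _; rewrite /f; case: ifP.
- by rewrite setUv.
- exact: measurableC.
rewrite (eq_integral (cst A%:E)) => [|y /set_mem ->]; last by rewrite /f eqxx.
rewrite [X in _ + X](eq_integral (cst B%:E)) => [|y /set_mem yc]; last by rewrite /f ifF //; apply/eqP.
rewrite !integral_cst //; last exact: measurableC.
have PC : P (~` [set c]) = (1 - fine (P [set c]))%:E.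
  by rewrite probability_setC // probability_set1E.
by rewrite EFinD !EFinM -PC -probability_set1E.
Qed.

Lemma iint_few_off0 n : iint P n (few_off c 0) = (fine (P [set c]) ^+ n)%:E.
Proof.
elim: n => [|n IHn] /=; first by rewrite /few_off expr0.
set q := fine _; have q0 : (0 <= q)%R by apply: fine_ge0.
have -> : (fun y => iint P n (fun s => few_off c 0 (y :: s))) =
          (fun y => (if y == c then q ^+ n else 0)%:E).
  apply: funext => y; case: eqP => [->|/eqP yc].
    by rewrite -IHn; congr (iint _ _ _); apply: funext => s; rewrite /few_off /= eqxx.
  by rewrite -(iint_cst n 0); congr (iint _ _ _); apply: funext => s; rewrite /few_off /= yc.
by rewrite integral_if_eq ?exprn_ge0 // mul0r addr0 exprSr.
Qed.

Lemma iint_few_off1 n : iint P n (few_off c 1) = (phi n (fine (P [set c])))%:E.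
Proof.
elim: n => [|n IHn] /=; first by rewrite /few_off /phi expr0 !mul0r addr0.
set q := fine _; have q0 : (0 <= q)%R by apply: fine_ge0.
have -> : (fun y => iint P n (fun s => few_off c 1 (y :: s))) =
          (fun y => (if y == c then phi n q else q ^+ n)%:E).
  apply: funext => y; case: eqP => [->|/eqP yc].
    by rewrite -IHn; congr (iint _ _ _); apply: funext => s; rewrite /few_off /= eqxx.
  by rewrite -iint_few_off0; congr (iint _ _ _); apply: funext => s; rewrite /few_off /= yc.
have phi0 : (0 <= phi n q)%R.
  by rewrite -lee_fin -IHn; apply: iint_ge0 => s; rewrite /few_off; case: ifP.
by rewrite integral_if_eq ?exprn_ge0 // phiS.
Qed.

End IteratedIntegral.

Lemma winner_law_ge_phi (R : realType) k (P : probability R R) : (1 < k)%N ->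
  ((phi k (fine (P [set (2^-1 : R)%R])))%:E <= winner_law k P [set (2^-1 : R)%R])%E.
Proof.
move=> k_gt1; rewrite -iint_few_off1 /winner_law.
have law_ge0 (x : 'I_k -> R) :
    (0 <= \sum_i win_prob x i * \1_[set 2^-1] (x i))%R.
  by apply: sumr_ge0 => i _; rewrite mulr_ge0 ?win_prob_ge0 // indicE ler0n.
apply: le_iint => [s|s|s sk]; rewrite /few_off ?lee_fin; first by case: ifP.
  exact: law_ge0.
case: ifP => [one_off|_]; last exact: law_ge0.
rewrite sum_win_prob_center // => i j xi xj; apply: val_inj.
by apply: (count_le1_nth_inj one_off) xi xj; rewrite sk.
Qed.

Section PhiDynamics.
Variables (R : realType) (n : nat).
Implicit Types (p : R).

Definition drift p : R := n.+1%:R * p ^+ n - \sum_(j < n) p ^+ j.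

Definition drift_poly : {poly R} := n.+1%:R *: 'X^n - \sum_(j < n) 'X^j.

Lemma horner_drift_poly p : drift_poly.[p] = drift p.
Proof.
rewrite /drift_poly hornerD hornerN hornerZ hornerXn horner_sum.
by under eq_bigr do rewrite hornerXn.
Qed.

Lemma phi_subr p : phi n.+2 p - p = p * (1 - p) * drift p.
Proof.
have geom : (1 - p) * \sum_(j < n) p ^+ j = 1 - p ^+ n.
  by apply/esym; rewrite -opprB subrX1 -mulNr opprB.
rewrite /drift mulrBr -[_ * _ * (\sum_(j < n) _)]mulrA geom /phi /= -!natr1 !exprS.
ring.
Qed.

Lemma subr_phi p : 1 - phi n.+2 p = (1 - p) * (1 - p * drift p).
Proof.
have -> : 1 - phi n.+2 p = (1 - p) - (phi n.+2 p - p) by ring.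
by rewrite phi_subr; ring.
Qed.

Definition drift_scaled p : R := n.+1%:R - \sum_(j < n) (p ^+ (n - j))^-1.

Lemma drift_scaledE p : 0 < p -> drift p = p ^+ n * drift_scaled p.
Proof.
move=> p0; rewrite /drift /drift_scaled mulrBr mulr_sumr mulrC; congr (_ - _).
apply: eq_bigr => j _.
have -> : p ^+ n = p ^+ j * p ^+ (n - j) by rewrite -exprD subnKC // ltnW.
by rewrite mulfK // expf_neq0 // gt_eqF.
Qed.

Lemma drift_scaled_le a b : 0 < a -> a <= b -> drift_scaled a <= drift_scaled b.
Proof.
move=> a0 ab; rewrite lerD2l lerN2; apply: ler_sum => j _.
have b0 := lt_le_trans a0 ab.
by rewrite lef_pV2 ?posrE ?exprn_gt0 // lerXn2r // ?nnegrE ltW.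
Qed.

Lemma drift_scaled_lt a b : (0 < n)%N -> 0 < a -> a < b -> drift_scaled a < drift_scaled b.
Proof.
move=> n0 a0 ab; have b0 := lt_trans a0 ab.
rewrite /drift_scaled ltrD2l ltrN2; case: n n0 => // m _.
rewrite !big_ord_recl /= subn0 ltr_leD //.
  by rewrite ltf_pV2 ?posrE ?exprn_gt0 // ltrXn2r // ltW.
apply: ler_sum => j _.
by rewrite lef_pV2 ?posrE ?exprn_gt0 // lerXn2r // ?nnegrE ltW.
Qed.

Lemma phi_fixed_point : exists c : R, [/\ c < 1, phi n.+2 c = c &
  forall p0, c < p0 -> exists2 d, 0 < d & forall p, p0 <= p -> d <= p * drift p].
Proof.
have [n0|n0] := posnP n.
  exists 0; split => //; first by rewrite /phi n0 !expr0n /=; ring.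
  move=> p0 p00; exists p0 => // p p0p.
  by rewrite /drift n0 big_ord0 expr0 subr0 !mulr1.
have drift0 : drift 0 = -1.
  rewrite /drift expr0n gtn_eqF // mulr0 sub0r; congr (- _).
  by case: n n0 => // m _; rewrite big_ord_recl expr0 big1 ?addr0 // => j _; rewrite expr0n.
have drift1 : drift 1 = 1.
  rewrite /drift expr1n mulr1 (eq_bigr (fun=> 1)) => [|j _]; last exact: expr1n.
  by rewrite sumr_const card_ord -natr1 addrAC subrr add0r.
have [c] : exists2 c, c \in `[(0 : R), 1] & drift_poly.[c] = 0.
  apply: IVT => //; first exact/continuous_subspaceT/continuous_horner.
  rewrite !horner_drift_poly drift0 drift1 ge_min le_max.
  by apply/andP; split; apply/orP; [left | right]; lra.
rewrite in_itv /= => /andP[c0 c1]; rewrite horner_drift_poly => driftc.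
have c_pos : 0 < c.
  by rewrite lt_def c0 andbT; apply: contra_eq_neq driftc => ->; rewrite drift0; lra.
have c_lt1 : c < 1.
  by rewrite lt_def c1 andbT; apply: contra_eq_neq driftc => <-; rewrite drift1; lra.
have scaled_c : drift_scaled c = 0.
  move: driftc; rewrite drift_scaledE // => /eqP.
  by rewrite mulf_eq0 expf_eq0 gt_eqF //= andbF => /eqP.
exists c; split => //.
  by apply/eqP; rewrite -subr_eq0 phi_subr driftc mulr0.
move=> p0 cp0; have p0_pos := lt_trans c_pos cp0.
have scaled_p0 : 0 < drift_scaled p0 by rewrite -scaled_c drift_scaled_lt.
exists (p0 ^+ n.+1 * drift_scaled p0); first by rewrite mulr_gt0 // exprn_gt0.
move=> p p0p; have p_pos := lt_le_trans p0_pos p0p.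
rewrite drift_scaledE // mulrA -exprS.
rewrite ler_pM ?exprn_ge0 ?(ltW p0_pos) ?(ltW scaled_p0) //.
  by rewrite lerXn2r // ?nnegrE ltW.
exact: drift_scaled_le.
Qed.

End PhiDynamics.

Lemma phi_attracting (R : realType) n : exists c : R, [/\ c < 1, phi n.+2 c = c &
  forall p0, c < p0 -> exists2 r, 0 <= r < 1 &
    forall p, p0 <= p <= 1 -> 1 - phi n.+2 p <= r * (1 - p)].
Proof.
have [c [c1 phic drift_pos]] := phi_fixed_point R n.
exists c; split => // p0 /drift_pos[d d0 drift_ge].
have m0 : 0 < Num.min d 1 by rewrite lt_min d0 ltr01.
have m1 : Num.min d 1 <= 1 by rewrite ge_min lexx orbT.
exists (1 - Num.min d 1); first by apply/andP; split; lra.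
move=> p /andP[p0p p1]; rewrite subr_phi mulrC ler_wpM2r ?subr_ge0 // lerD2l lerN2.
by apply: le_trans (drift_ge _ p0p); rewrite ge_min lexx.
Qed.

Lemma contraction_cvg1 (R : realType) (f : R -> R) (u : R^nat) p0 r :
  0 <= r < 1 -> (forall p, p0 <= p <= 1 -> 1 - f p <= r * (1 - p)) ->
  p0 <= u 0%N -> (forall t, u t <= 1) -> (forall t, f (u t) <= u t.+1) ->
  u @ \oo --> (1 : R).
Proof.
move=> /andP[r0 r1] contract u0 u1 step.
have bound t : p0 <= u t /\ 1 - u t <= r ^+ t * (1 - u 0%N).
  elim: t => [|t [p0t bt]]; first by rewrite expr0 mul1r.
  have ct := contract _ (introT andP (conj p0t (u1 t))).
  have st := step t; have := u1 t.
  have : r * (1 - u t) <= r * (r ^+ t * (1 - u 0%N)) by rewrite ler_wpM2l.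
  rewrite exprS -mulrA; nra.
apply: (@squeeze_cvgr _ _ _ _ (fun t => 1 - geometric (1 - u 0%N) r t) (cst 1)).
- near=> t; rewrite /= u1 andbT lerBlDr -lerBlDl mulrC.
  by case: (bound t).
- rewrite -[X in _ --> X]subr0; apply: cvgB; first exact: cvg_cst.
  by apply: cvg_geometric; rewrite ger0_norm.
- exact: cvg_cst.
Unshelve. all: end_near.
Qed.

Theorem mainTheorem18 (R : realType) (k : nat) (hk : (2 <= k)%N) :
  exists pstar : R,
    pstar < 1 /\ phi k pstar = pstar /\
    forall (p : R) (F : nat -> probability R R),
      F 0%N `[0%R, 1%R]%classic = 1%E ->
      F 0%N [set 2^-1] = p%:E ->
      pstar < p ->
      (forall (t : nat) (A : set R), measurable A ->
          F t.+1 A = winner_law k (F t) A) ->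
      (fun t => F t [set 2^-1]) @ \oo --> 1%E.
Proof.
have [n ->] : exists n, k = n.+2 by exists (k - 2)%N; rewrite -addn2 subnK.
have [c [c1 phic attract]] := phi_attracting R n.
exists c; split => //; split => // p F _ F0 cp law.
have [r r01 contract] := attract p cp.
pose q t := fine (F t [set 2^-1]).
apply: cvg_EFin; first by apply: nearW => t; apply: fin_num_measure.
apply: (@contraction_cvg1 R _ q p r r01 contract).
- by rewrite /q F0.
- by move=> t; rewrite -lee_fin -probability_set1E probability_le1.
- move=> t; rewrite -lee_fin -probability_set1E law //.
  exact: winner_law_ge_phi.
Qed.
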